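(* Let $A=(a(x),dF(x))$ and $B=(b(x),dF(x))$ be games. Then $h(p)=1/\int\frac{1}{pa(x)+(1-p)b(x)}\,dF(x)$ is concave on $[0,1]$.
   Context: A game is a pair $(a(x),dF(x))$ with $dF$ a probability measure on $\mathbb{R}$ and $a\ge0$ measurable with finite positive integral. Convention: $1/(+\infty)=0$. *)

From HB Require Import structures.
From mathcomp Require Import all_boot all_order all_algebra.
From mathcomp Require Import all_classical all_reals all_analysis.
Import Order.TTheory GRing.Theory Num.Theory.
Local Open Scope classical_set_scope.
Local Open Scope ring_scope.
Local Open Scope ereal_scope.

Definition is_game {R : realType} (F : probability R R) (a : R -> R) : Prop :=
  [/\ measurable_fun setT a,
      (forall x, (0 <= a x)%R),
      0 < \int[F]_x (a x)%:E &
      \int[F]_x (a x)%:E < +oo].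

(* h(p) = 1 / \int 1/(p a(x) + (1-p) b(x)) dF(x), computed in the extended
   reals: 1/0 = +oo inside the integral and 1/(+oo) = 0 (inve). *)
Definition hmix {R : realType} (F : probability R R) (a b : R -> R) (p : R)
  : \bar R :=
  (\int[F]_x (((p * a x + (1 - p) * b x)%R)%:E)^-1)^-1.

From HB Require Import structures.
From mathcomp Require Import all_boot all_order all_algebra.
From mathcomp Require Import all_classical all_reals all_analysis.
From mathcomp Require Import measurable_realfun.
From mathcomp Require Import ring lra.
Import Order.TTheory GRing.Theory Num.Theory.

(* Write G p = \int dF / (p a + (1 - p) b), so that h = 1 / G; G p > 0 because
   the integrand is everywhere positive (1/0 = +oo), hence h p is finite.
   Given p, q, t, put m = t h(p) + (1 - t) h(q) and l1 = h(p)/m, l2 = h(q)/m,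
   so that t l1 + (1 - t) l2 = 1.  Convexity of the perspective (l, u) |-> l^2/u
   gives pointwise 1/(t u + (1 - t) v) <= t l1^2/u + (1 - t) l2^2/v; with
   u = p a + (1 - p) b and v = q a + (1 - q) b, integration yields
   G(t p + (1 - t) q) <= t l1^2 G(p) + (1 - t) l2^2 G(q) = 1/m,
   i.e. h(t p + (1 - t) q) >= m. *)

Set Implicit Arguments.
Unset Strict Implicit.

Local Open Scope classical_set_scope.
Local Open Scope ring_scope.

Lemma sqr_div_convex (R : realFieldType) (t l1 l2 u v : R) :
  0 <= t <= 1 -> 0 < u -> 0 < v ->
  (t * l1 + (1 - t) * l2) ^+ 2 / (t * u + (1 - t) * v)
    <= t * l1 ^+ 2 / u + (1 - t) * l2 ^+ 2 / v.
Proof.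
move=> /andP[t0 t1] u0 v0.
have w0 : 0 < t * u + (1 - t) * v by nra.
rewrite -subr_ge0.
have -> : t * l1 ^+ 2 / u + (1 - t) * l2 ^+ 2 / v
    - (t * l1 + (1 - t) * l2) ^+ 2 / (t * u + (1 - t) * v)
  = t * (1 - t) * (l1 * v - l2 * u) ^+ 2 / (u * v * (t * u + (1 - t) * v)).
  by field; rewrite !gt_eqF.
by apply: divr_ge0; [rewrite mulr_ge0 ?sqr_ge0 ?mulr_ge0 ?subr_ge0 | rewrite ltW ?mulr_gt0].
Qed.

Lemma convex_comb_itv01 (R : realFieldType) (p q t : R) :
  0 <= p <= 1 -> 0 <= q <= 1 -> 0 <= t <= 1 -> 0 <= t * p + (1 - t) * q <= 1.
Proof. by move=> /andP[? ?] /andP[? ?] /andP[? ?]; apply/andP; split; nra. Qed.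

Local Open Scope ereal_scope.

Lemma inve_mix0l_le (R : realFieldType) (t l1 l2 v : R) :
  (0 <= t <= 1)%R -> (t * l1 + (1 - t) * l2 = 1)%R -> (0 <= v)%R ->
  ((t * 0 + (1 - t) * v)%R%:E)^-1
    <= (t * l1 ^+ 2)%:E * (0%:E)^-1 + ((1 - t) * l2 ^+ 2)%:E * (v%:E)^-1.
Proof.
(* Either t l1^2 > 0 and the right side is +oo, or t l1 = 0, (1 - t) l2 = 1
   and both sides equal 1/((1 - t) v). *)
move=> /andP[t0 t1] l12 v0; rewrite inve0 mulr0 add0r.
have c2v_ge0 : 0 <= ((1 - t) * l2 ^+ 2)%:E * (v%:E)^-1.
  by apply: mule_ge0; rewrite ?inve_ge0 lee_fin // mulr_ge0 ?sqr_ge0 ?subr_ge0.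
have := mulr_ge0 t0 (sqr_ge0 l1); rewrite le0r => /predU1P[c1_eq0|c1_gt0]; last first.
  by rewrite gt0_muley ?lte_fin // addye ?leey // gt_eqF // (lt_le_trans _ c2v_ge0).
have {l12} l12 : ((1 - t) * l2 = 1)%R.
  move/eqP: c1_eq0; rewrite mulf_eq0 sqrf_eq0 => /orP[]/eqP e;
  by move: l12; rewrite e ?mul0r ?mulr0 add0r.
have l2_gt0 : (0 < l2)%R by nra.
have -> : ((1 - t) * l2 ^+ 2 = l2)%R by rewrite expr2 mulrA l12 mul1r.
rewrite c1_eq0 mul0e add0e.
move: v0; rewrite le0r => /predU1P[->|v_gt0].
  by rewrite mulr0 inve0 gt0_muley ?lte_fin.
have l2E : (1 - t = l2^-1)%R.
  by apply: (mulIf (lt0r_neq0 l2_gt0)); rewrite l12 mulVf ?gt_eqF.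
by rewrite l2E !inver !gt_eqF ?mulr_gt0 ?invr_gt0 // -EFinM lee_fin invfM invrK mulrC.
Qed.

Lemma inve_mix_le (R : realFieldType) (t l1 l2 u v : R) :
  (0 <= t <= 1)%R -> (t * l1 + (1 - t) * l2 = 1)%R -> (0 <= u)%R -> (0 <= v)%R ->
  ((t * u + (1 - t) * v)%R%:E)^-1
    <= (t * l1 ^+ 2)%:E * (u%:E)^-1 + ((1 - t) * l2 ^+ 2)%:E * (v%:E)^-1.
Proof.
move=> t01 l12 u0 v0; move: u0; rewrite le0r => /predU1P[->|u_gt0].
  exact: inve_mix0l_le.
move: v0; rewrite le0r => /predU1P[->|v_gt0].
- have t01' : (0 <= 1 - t <= 1)%R by case/andP: t01 => ? ?; apply/andP; split; lra.
  have := @inve_mix0l_le _ (1 - t) l2 l1 u t01'.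
  by rewrite subKr addrC l12 addrC addeC; apply => //; exact: ltW.
- have w_gt0 : (0 < t * u + (1 - t) * v)%R by case/andP: t01 => t0 t1; nra.
  rewrite !inver !gt_eqF // -!EFinM -EFinD lee_fin.
  by have := sqr_div_convex l1 l2 t01 u_gt0 v_gt0; rewrite l12 expr1n div1r.
Qed.

Lemma measurable_EFin_inv {R : realType} :
  measurable_fun [set: R] (fun r : R => (r%:E)^-1).
Proof.
have -> : (fun r : R => (r%:E)^-1) = fun r => if r == 0%R then +oo else (r^-1)%:E.
  by apply/funext => r; rewrite inver.
apply: measurable_fun_if => //; first exact: measurable_fun_eqr.
apply/measurable_EFinP; rewrite setTI.
rewrite (_ : _ @^-1` _ = ~` [set 0%R]); last by apply/seteqP; split => r /=; case: eqP.
apply: open_continuous_measurable_fun.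
  exact/closed_openC/accessible_closed_set1/hausdorff_accessible/Rhausdorff.
by move=> r; rewrite inE => /eqP r0; exact: inv_continuous.
Qed.

Lemma integral_gt0 d (T : measurableType d) (R : realType)
    (mu : {measure set T -> \bar R}) (D : set T) (f : T -> \bar R) :
  measurable D -> 0 < mu D -> measurable_fun D f ->
  (forall x, D x -> 0 < f x) -> 0 < \int[mu]_(x in D) f x.
Proof.
move=> mD muD_gt0 mf f_gt0.
rewrite lt_neqAle integral_ge0 ?andbT; last by move=> x /f_gt0/ltW.
apply/eqP => int_f0.
have : \int[mu]_(x in D) `|f x| = 0.
  by rewrite int_f0; apply: eq_integral => x /[!inE] /f_gt0/ltW/gee0_abs.
case/(ae_eq_integral_abs mu mD mf) => N [mN muN0 DN].
have : mu D <= mu N.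
  apply: le_measure; rewrite ?inE //.
  by move=> x Dx; apply: DN => /(_ Dx) fx0; move: (f_gt0 x Dx); rewrite fx0 ltxx.
by rewrite muN0 leNgt muD_gt0.
Qed.

Lemma mulr_sqr_inve (R : realFieldType) (c x : R) :
  (0 <= x)%R -> (c * x ^+ 2)%:E * (x%:E)^-1 = (c * x)%:E.
Proof.
(* At x = 0 both sides vanish, as 0 * +oo = 0. *)
rewrite le0r => /predU1P[->|x_gt0]; first by rewrite expr0n !mulr0 mul0e.
by rewrite inver gt_eqF // -EFinM; congr EFin; field; rewrite gt_eqF.
Qed.

Section mixed_game.
Variables (R : realType) (F : probability R R) (a b : R -> R).
Hypotheses (ma : measurable_fun setT a) (mb : measurable_fun setT b).
Hypotheses (a_ge0 : forall x, (0 <= a x)%R) (b_ge0 : forall x, (0 <= b x)%R).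

Definition mix (p x : R) : R := (p * a x + (1 - p) * b x)%R.

Definition mix_inv_integral (p : R) : \bar R := \int[F]_x ((mix p x)%:E)^-1.

Lemma hmixE p : hmix F a b p = (mix_inv_integral p)^-1.
Proof. by []. Qed.

Lemma mix_ge0 p x : (0 <= p <= 1)%R -> (0 <= mix p x)%R.
Proof. by case/andP=> p0 p1; rewrite addr_ge0 ?mulr_ge0 ?subr_ge0. Qed.

Lemma mix_affine p q t x :
  mix (t * p + (1 - t) * q) x = (t * mix p x + (1 - t) * mix q x)%R.
Proof. by rewrite /mix; ring. Qed.

Lemma measurable_mix_inv p : measurable_fun setT (fun x => ((mix p x)%:E)^-1).
Proof.
have mmix : measurable_fun setT (mix p).
  by apply: measurable_funD; apply: measurable_funM => //; exact: measurable_cst.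
exact: measurableT_comp measurable_EFin_inv mmix.
Qed.

Lemma mix_inv_ge0 p x : (0 <= p <= 1)%R -> 0 <= ((mix p x)%:E)^-1.
Proof. by move=> p01; rewrite inve_ge0 lee_fin mix_ge0. Qed.

Lemma mix_inv_integral_gt0 p : (0 <= p <= 1)%R -> 0 < mix_inv_integral p.
Proof.
move=> p01; apply: integral_gt0 => //; first by have /= -> := probability_setT F.
  exact: measurable_mix_inv.
move=> x _; rewrite inver; case: ifPn => [_|mix_neq0]; first exact: ltey.
by rewrite lte_fin invr_gt0 lt0r mix_neq0 mix_ge0.
Qed.

Lemma mix_inv_integral_le p q t l1 l2 :
  (0 <= p <= 1)%R -> (0 <= q <= 1)%R -> (0 <= t <= 1)%R ->
  (t * l1 + (1 - t) * l2 = 1)%R ->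
  mix_inv_integral (t * p + (1 - t) * q)
    <= (t * l1 ^+ 2)%:E * mix_inv_integral p
       + ((1 - t) * l2 ^+ 2)%:E * mix_inv_integral q.
Proof.
move=> p01 q01 t01 l12; have [t0 t1] := andP t01.
have f_ge0 r : (0 <= r <= 1)%R -> forall x, setT x -> 0 <= ((mix r x)%:E)^-1.
  by move=> r01 x _; exact: mix_inv_ge0.
have cf_ge0 c r : (0 <= c)%R -> (0 <= r <= 1)%R ->
    forall x, setT x -> 0 <= c%:E * ((mix r x)%:E)^-1.
  by move=> c0 r01 x _; rewrite mule_ge0 ?lee_fin ?mix_inv_ge0.
have mcf c r : measurable_fun setT (fun x => c%:E * ((mix r x)%:E)^-1).
  by apply: emeasurable_funM => //; exact: measurable_mix_inv.
have c1_ge0 : (0 <= t * l1 ^+ 2)%R by rewrite mulr_ge0 ?sqr_ge0.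
have c2_ge0 : (0 <= (1 - t) * l2 ^+ 2)%R by rewrite mulr_ge0 ?sqr_ge0 ?subr_ge0.
rewrite /mix_inv_integral.
rewrite -(ge0_integralZl_EFin _ _ (f_ge0 _ p01) (measurable_mix_inv p)) //.
rewrite -(ge0_integralZl_EFin _ _ (f_ge0 _ q01) (measurable_mix_inv q)) //.
have y01 := convex_comb_itv01 p01 q01 t01.
rewrite -ge0_integralD //; [|exact: cf_ge0|exact: cf_ge0].
apply: ge0_le_integral => //.
- exact: f_ge0.
- exact: measurable_mix_inv.
- exact: emeasurable_funD.
- by move=> x _; rewrite mix_affine inve_mix_le ?mix_ge0.
Qed.

Lemma hmix_fin p : (0 <= p <= 1)%R ->
  exists2 h : R, (0 <= h)%R & hmix F a b p = h%:E /\ mix_inv_integral p = (h%:E)^-1.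
Proof.
move=> p01; have G_gt0 := mix_inv_integral_gt0 p01.
have G_inv_fin : (mix_inv_integral p)^-1 \is a fin_num.
  by apply: fin_numV; rewrite gt_eqF // (lt_trans _ G_gt0) ?ltNy0.
exists (fine (hmix F a b p)); first by rewrite fine_ge0 // inve_ge0 ltW.
by rewrite fineK // hmixE inveK.
Qed.

Lemma hmix_concave p q t :
  (0 <= p <= 1)%R -> (0 <= q <= 1)%R -> (0 <= t <= 1)%R ->
  t%:E * hmix F a b p + (1 - t)%:E * hmix F a b q
    <= hmix F a b (t * p + (1 - t) * q).
Proof.
move=> p01 q01 t01; have [t0 t1] := andP t01.
have [hp hp_ge0 [-> Gp]] := hmix_fin p01.
have [hq hq_ge0 [-> Gq]] := hmix_fin q01.
have y01 := convex_comb_itv01 p01 q01 t01.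
rewrite -!EFinM -EFinD; set m := (t * hp + (1 - t) * hq)%R.
have /predU1P[m0|m_gt0] : ((m == 0) || (0 < m))%R.
  by rewrite -le0r addr_ge0 ?mulr_ge0 ?subr_ge0.
  by rewrite m0 hmixE inve_ge0; apply: integral_ge0 => x _; exact: mix_inv_ge0.
have l12 : (t * (hp / m) + (1 - t) * (hq / m) = 1)%R.
  by rewrite !mulrA -mulrDl divff ?gt_eqF.
have coefE c h : (c * (h / m) ^+ 2 = c / m ^+ 2 * h ^+ 2)%R.
  by field; rewrite gt_eqF.
have := mix_inv_integral_le p01 q01 t01 l12.
rewrite Gp Gq !coefE !mulr_sqr_inve // -EFinD.
have -> : (t / m ^+ 2 * hp + (1 - t) / m ^+ 2 * hq = m^-1)%R.
  by rewrite /m; field; rewrite -/m gt_eqF.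
rewrite hmixE inve_pge ?inE ?lee_fin ?(ltW m_gt0) //; last first.
  by apply: integral_ge0 => x _; exact: mix_inv_ge0.
by rewrite inver gt_eqF.
Qed.

End mixed_game.

Theorem lemmaD10 (R : realType) (F : probability R R) (a b : R -> R) :
  is_game F a -> is_game F b ->
  forall p q t : R,
    (0 <= p <= 1)%R -> (0 <= q <= 1)%R -> (0 <= t <= 1)%R ->
    t%:E * hmix F a b p + (1 - t)%:E * hmix F a b q
      <= hmix F a b (t * p + (1 - t) * q)%R.
Proof. by move=> [ma a_ge0 _ _] [mb b_ge0 _ _]; exact: hmix_concave. Qed.
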